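(* For $n\in\{3,4,5\}$, the prism $Y_n=C_n\square P_2$ satisfies $IDI(Y_n)\neq 2$.
   Context: $C_n$ is the cycle on $n$ vertices, $P_2$ the path on two vertices, and $\square$ the Cartesian product. For a finite simple connected graph $G=(V,E)$ with diameter $d$, a rank assignment is a function $f:V\to\mathbb{R}$; under $f$, the string of a vertex $v$ is the $d$-vector whose $i$-th coordinate is the sum of $f(w)$ over all vertices $w$ with $d(v,w)=i$. The ID-index $IDI(G)$ is the minimum $k$ such that there exists $f:V\to\mathbb{R}$ with $|f(V)|=k$ under which all vertices have distinct strings. *)

From HB Require Import structures.
From mathcomp Require Import all_boot all_order all_algebra.
From mathcomp Require Import reals.
Set Implicit Arguments. Unset Strict Implicit. Unset Printing Implicit Defensive.
Import Order.TTheory GRing.Theory Num.Theory.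

Section Graphs.
Variable T : finType.
Variable e : rel T.

Fixpoint ball (x : T) (k : nat) : {set T} :=
  match k with
  | 0 => [set x]
  | k'.+1 => ball x k' :|: [set y | [exists z in ball x k', e z y]]
  end.

(* graph distance d(x,y): least k with y within k steps of x
   (for a connected graph this is always < #|T|) *)
Definition dist (x y : T) : nat :=
  find (fun k => y \in ball x k) (iota 0 #|T|).

Definition diameter : nat := \max_(x : T) \max_(y : T) dist x y.

Definition vstring (R : realType) (f : T -> R) (v : T) : seq R :=
  [seq (\sum_(w : T | dist v w == i) f w)%R | i <- iota 1 diameter].

Definition num_values (R : realType) (f : T -> R) : nat :=
  size (undup (codom f)).

Definition id_assignment (R : realType) (f : T -> R) : Prop :=
  injective (vstring f).

Definition IDI_is (R : realType) (k : nat) : Prop :=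
  (exists f : T -> R, id_assignment f /\ num_values f = k) /\
  (forall f : T -> R, id_assignment f -> k <= num_values f).
End Graphs.

(* Prism Y_n = C_n □ P_2 on vertex set 'I_n * bool *)
Definition prism_adj (n : nat) : rel ('I_n * bool) :=
  fun u v =>
    ((u.2 == v.2) &&
       ((nat_of_ord v.1 == (u.1.+1 %% n)) || (nat_of_ord u.1 == (v.1.+1 %% n))))
    || ((u.1 == v.1) && (u.2 != v.2)).
Arguments prism_adj n : clear implicits.
Arguments IDI_is {T} e R k.

From HB Require Import structures.
From mathcomp Require Import all_boot all_order all_algebra.
From mathcomp Require Import reals.
Set Implicit Arguments. Unset Strict Implicit. Unset Printing Implicit Defensive.
Import GRing.Theory.

(** If [f] takes only the values [a] and [b], the [i]-th entry of the string of [v] is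
    [a] times the number of [a]-vertices plus [b] times the number of [b]-vertices at
    distance [i] from [v].  So an ID assignment with two values yields a 2-colouring of
    the vertices in which no two vertices see the same colour counts at every distance.
    For the prisms [Y_3], [Y_4], [Y_5] an exhaustive search over all [2^(2n)] colourings
    finds two such twin vertices in each, once distances are computed on an explicit
    list of vertices. *)

Section TwoValuedAssignments.
Variables (T : finType) (e : rel T).

(* Indices run up to [#|T|], which bounds the diameter, so that the profile can be
   computed without computing the diameter. *)
Definition colour_profile (g : pred T) (v : T) : seq (nat * nat) :=
  [seq (#|[pred u | (dist e v u == i) && g u]|, #|[pred u | (dist e v u == i) && ~~ g u]|)
  | i <- iota 1 #|T|].

Lemma dist_le_card x y : dist e x y <= #|T|.
Proof. by rewrite -[#|T|](size_iota 0); apply: find_size. Qed.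

Lemma diameter_le_card : diameter e <= #|T|.
Proof. by apply/bigmax_leqP => x _; apply/bigmax_leqP => y _; apply: dist_le_card. Qed.

Variable R : realType.

Lemma eq_vstring (f1 f2 : T -> R) : f1 =1 f2 -> vstring e f1 =1 vstring e f2.
Proof. by move=> f12 v; apply: eq_map => i; apply: eq_bigr => u _. Qed.

Lemma sum_two_valued (P g : pred T) (a b : R) :
  (\sum_(u | P u) (if g u then b else a) =
   a *+ #|[pred u | P u && ~~ g u]| + b *+ #|[pred u | P u && g u]|)%R.
Proof.
rewrite (bigID g) /= addrC -!sumr_const.
by congr (_ + _)%R; apply: eq_bigr => u /andP[_]; [move/negbTE -> | move ->].
Qed.

Lemma vstring_two_valued_eq (a b : R) (g : pred T) v w :
  colour_profile g v = colour_profile g w ->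
  vstring e (fun u => if g u then b else a) v = vstring e (fun u => if g u then b else a) w.
Proof.
move/eq_in_map=> profile_vw; apply/eq_in_map => i.
rewrite mem_iota add1n ltnS => /andP[i_gt0 i_le_diam].
have /profile_vw[cnt_g cnt_ng] : i \in iota 1 #|T|.
  by rewrite mem_iota i_gt0 add1n ltnS (leq_trans i_le_diam diameter_le_card).
by rewrite !sum_two_valued cnt_g cnt_ng.
Qed.

Lemma two_valued (f : T -> R) :
  num_values f = 2 -> exists a b : R, forall u, f u = if f u == b then b else a.
Proof.
rewrite /num_values; case values_f: (undup (codom f)) => [|a [|b []]] // _.
exists a, b => u; have: f u \in undup (codom f) by rewrite mem_undup codom_f.
by rewrite values_f !inE; case: (f u =P b) => [-> | _] //; rewrite orbF => /eqP.
Qed.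

Lemma id_assignment_two_valued (f : T -> R) :
  id_assignment e f -> num_values f = 2 -> exists g : pred T, injective (colour_profile g).
Proof.
move=> id_f /two_valued[a [b fE]]; exists (fun u => f u == b) => v w profile_vw.
apply: id_f; rewrite !(eq_vstring fE).
exact: vstring_two_valued_eq.
Qed.

End TwoValuedAssignments.

Fixpoint bool_seqs (k : nat) : seq (seq bool) :=
  if k is k'.+1 then [seq b :: bs | b <- [:: true; false], bs <- bool_seqs k'] else [:: [::]].

Lemma mem_bool_seqs (bs : seq bool) : bs \in bool_seqs (size bs).
Proof.
elim: bs => [|b bs IHbs] //.
by apply: (allpairs_f (fun b bs => b :: bs)) => //; case: b.
Qed.

Definition sphere_counts (row : seq nat) (bs : seq bool) : seq (nat * nat) :=
  [seq (count (pred1 (i, true)) (zip row bs), count (pred1 (i, false)) (zip row bs))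
  | i <- iota 1 (size row)].

Section EnumeratedGraphs.
Variables (T : finType) (e : rel T) (vs : seq T).

Fixpoint ball_seq (x : T) (k : nat) : seq T :=
  if k is k'.+1 then
    [seq y <- vs | (y \in ball_seq x k') || has (fun z => e z y) (ball_seq x k')]
  else [:: x].

Definition seq_dist (x y : T) : nat := find (fun k => y \in ball_seq x k) (iota 0 (size vs)).

Definition distance_rows : seq (seq nat) := [seq [seq seq_dist v u | u <- vs] | v <- vs].

(* A colouring is the list of the colours of [vs]; the [let] makes [vm_compute]
   evaluate the distance table once for all colourings. *)
Definition colourings_have_twins : bool :=
  let rows := distance_rows in
  all (fun bs => ~~ uniq [seq sphere_counts row bs | row <- rows]) (bool_seqs (size vs)).

Hypotheses (vs_uniq : uniq vs) (mem_vs : forall x, x \in vs).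

Lemma card_enumeration : #|T| = size vs.
Proof. by rewrite -(card_uniqP vs_uniq); apply: eq_card => x; rewrite mem_vs. Qed.

Lemma card_count (P : pred T) : #|[pred u | P u]| = count P vs.
Proof.
rewrite -size_filter -(card_uniqP (filter_uniq P vs_uniq)).
by apply: eq_card => x; rewrite mem_filter mem_vs andbT.
Qed.

Lemma mem_ball_seq x k y : (y \in ball e x k) = (y \in ball_seq x k).
Proof.
elim: k y => [|k IHk] y /=; first by rewrite in_set1 inE.
rewrite in_setU inE IHk mem_filter mem_vs andbT; congr (_ || _).
apply/existsP/hasP => [[z /andP[z_in ezy]] | [z z_in ezy]]; exists z => //.
  by rewrite -IHk.
by rewrite IHk z_in.
Qed.

Lemma dist_seqE x y : dist e x y = seq_dist x y.
Proof.
by rewrite /dist /seq_dist card_enumeration; apply: eq_find => k; rewrite mem_ball_seq.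
Qed.

Lemma colour_profileE (g : pred T) v :
  colour_profile e g v = sphere_counts [seq seq_dist v u | u <- vs] (map g vs).
Proof.
rewrite /colour_profile /sphere_counts size_map card_enumeration zip_map.
apply: eq_map => i; rewrite !count_map !card_count.
by congr (_, _); apply: eq_count => u; rewrite /= xpair_eqE dist_seqE ?eqb_id ?eqbF_neg.
Qed.

Lemma colourings_have_twinsP :
  colourings_have_twins -> forall g : pred T, ~ injective (colour_profile e g).
Proof.
move=> /allP twins g inj_profile.
have /negP[] : ~~ uniq [seq sphere_counts row (map g vs) | row <- distance_rows].
  by apply: twins; rewrite -(size_map g) mem_bool_seqs.
rewrite -map_comp map_inj_in_uniq //.
by move=> v w _ _ /=; rewrite -!colour_profileE => /inj_profile.
Qed.

Lemma two_valued_not_id_assignment (R : realType) (f : T -> R) :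
  colourings_have_twins -> num_values f = 2 -> ~ id_assignment e f.
Proof.
move=> twins two_values id_f.
have [g] := id_assignment_two_valued id_f two_values.
exact: colourings_have_twinsP.
Qed.

End EnumeratedGraphs.

Definition prism_vertices (m : nat) : seq ('I_m.+1 * bool) :=
  [seq (i, b) | i <- mkseq inZp m.+1, b <- [:: true; false]].

Lemma map_val_mkseq_inZp (m : nat) : map val (mkseq (@inZp m) m.+1) = iota 0 m.+1.
Proof.
rewrite -map_comp -[RHS]map_id; apply/eq_in_map => k.
by rewrite mem_iota => /= k_lt; rewrite modn_small.
Qed.

Lemma prism_vertices_uniq (m : nat) : uniq (prism_vertices m).
Proof.
apply: allpairs_uniq => //; last by move=> [? ?] [? ?].
by rewrite -(map_inj_uniq val_inj) map_val_mkseq_inZp iota_uniq.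
Qed.

Lemma mem_prism_vertices (m : nat) (x : 'I_m.+1 * bool) : x \in prism_vertices m.
Proof.
case: x => i b; apply: (allpairs_f (fun i b => (i, b))); last by case: b.
by rewrite -(mem_map val_inj) map_val_mkseq_inZp mem_iota ltn_ord.
Qed.

Lemma prism_colourings_have_twins (m : nat) :
  m.+1 \in [:: 3; 4; 5] -> colourings_have_twins (prism_adj m.+1) (prism_vertices m).
Proof. by rewrite !inE => /or3P[] /eqP[->]; vm_compute. Qed.

Theorem mainTheorem5 (R : realType) (n : nat) :
  n \in [:: 3; 4; 5] -> ~ IDI_is (prism_adj n) R 2.
Proof.
case: n => [|m] // m_range [[f [id_f two_values]] _].
move: id_f; apply: two_valued_not_id_assignment two_values.
- exact: prism_vertices_uniq.
- exact: mem_prism_vertices.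
- exact: prism_colourings_have_twins.
Qed.
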